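(* For the grid graph $G=P_s \times P_t$ with $s\ge t\ge2$, $\dim_{1,f}(G)=\dim_f(G)$ if and only if $G\in\{P_2 \times P_2, P_3\times P_2, P_4\times P_2, P_3 \times P_3\}$.
   Context: $P_n$ is the path on $n$ vertices and $\times$ denotes the Cartesian product. $d(x,y)$ is the distance in $G$. For a function $g$ on $V(G)$ and $U\subseteq V(G)$, $g(U)=\sum_{s\in U}g(s)$. $R\{x,y\}=\{z: d(x,z)\ne d(y,z)\}$; $g:V(G)\to[0,1]$ is a resolving function if $g(R\{x,y\})\ge1$ for all distinct $x,y$, and $\dim_f(G)$ is the minimum of $g(V(G))$ over resolving functions. $d_1(x,y)=\min\{d(x,y),2\}$, $R_1\{x,y\}=\{z: d_1(x,z)\neq d_1(y,z)\}$; $h:V(G)\to[0,1]$ is a $1$-truncated resolving function if $h(R_1\{x,y\})\ge 1$ for all distinct $x,y$, and $\dim_{1,f}(G)$ is the minimum of $h(V(G))$ over such $h$. *)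

From HB Require Import structures.
From mathcomp Require Import all_boot all_order all_algebra.
From mathcomp Require Import all_classical all_reals.
Set Implicit Arguments. Unset Strict Implicit. Unset Printing Implicit Defensive.
Import Order.TTheory GRing.Theory Num.Theory.

Section Graphs.
Variable T : finType.
Variable e : rel T.

Fixpoint ball (n : nat) (x : T) : {set T} :=
  if n is n'.+1 then
    ball n' x :|: [set z | [exists y in ball n' x, e y z]]
  else [set x].

(* graph distance: least n with y reachable from x in at most n steps
   (for a connected graph this is < #|T|) *)
Definition dist (x y : T) : nat :=
  find (fun n => y \in ball n x) (iota 0 #|T|).

Definition dist1 (x y : T) : nat := minn (dist x y) 2.

Definition Rset (x y : T) : {set T} := [set z | dist x z != dist y z].
Definition R1set (x y : T) : {set T} := [set z | dist1 x z != dist1 y z].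

Local Open Scope ring_scope.
Local Open Scope classical_set_scope.

Variable R : realType.

Definition unit_valued (g : T -> R) : Prop := forall z, 0 <= g z <= 1.

Definition resolving_fun (g : T -> R) : Prop :=
  unit_valued g /\
  forall x y : T, x != y -> 1 <= \sum_(z in Rset x y) g z.

Definition trunc1_resolving_fun (h : T -> R) : Prop :=
  unit_valued h /\
  forall x y : T, x != y -> 1 <= \sum_(z in R1set x y) h z.

(* fractional metric dimension: minimum (= infimum, attained) of g(V) *)
Definition dimf : R :=
  inf [set r : R | exists g, resolving_fun g /\ r = \sum_z g z].

Definition dim1f : R :=
  inf [set r : R | exists h, trunc1_resolving_fun h /\ r = \sum_z h z].

End Graphs.

Definition path_adj (n : nat) : rel 'I_n :=
  fun i j => (i.+1 == j :> nat) || (j.+1 == i :> nat).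

Definition grid_adj (s t : nat) : rel ('I_s * 'I_t) :=
  fun u v => ((u.1 == v.1) && path_adj u.2 v.2)
          || ((u.2 == v.2) && path_adj u.1 v.1).

From mathcomp Require Import all_boot all_order all_algebra.
From mathcomp Require Import all_classical all_reals.
From mathcomp Require Import zify lra.
Set Implicit Arguments. Unset Strict Implicit. Unset Printing Implicit Defensive.
Import Order.TTheory GRing.Theory Num.Theory.

(* Both dimensions are values of the same linear program, with the constraint
   sets R{x,y} resp. R_1{x,y}; upper bounds come from explicit resolving
   functions and lower bounds from weighted packings of pairs (weak duality).
   Distances in P_s x P_t are Manhattan distances.  The two corners (0,0) and
   (s-1,0) resolve every pair, and R{(0,0),(1,1)}, R{(0,1),(1,0)} are disjoint,
   so dim_f = 2.  A vertex of R_1{x,y} is at distance at most 1 from x or y, so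
   for s >= 5 the pair {(s-1,0),(s-1,1)} adds a third disjoint set and
   dim_{1,f} >= 3; the grids P_4 x P_3 and P_4 x P_4 need explicit packings,
   and on the four small grids a resolving function of weight 2 exists. *)

Section FractionalDimension.
Variables (T : finType) (R : realType).
Local Open Scope ring_scope.
Local Open Scope classical_set_scope.
Implicit Types (S : T -> T -> {set T}) (g : T -> R).

Definition resolves (S : T -> T -> {set T}) (g : T -> R) : Prop :=
  unit_valued g /\ forall x y : T, x != y -> 1 <= \sum_(z in S x y) g z.

Definition frac_dim (S : T -> T -> {set T}) : R :=
  inf [set r : R | exists g, resolves S g /\ r = \sum_z g z].

Lemma frac_dim_le_sum S g : resolves S g -> frac_dim S <= \sum_z g z.
Proof.
move=> Sg; apply: ge_inf; last by exists g.
exists 0 => _ [h [[h01 _] ->]]; apply: sumr_ge0 => z _; by case/andP: (h01 z).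
Qed.

Lemma frac_dim_ge S g0 v : resolves S g0 ->
  (forall g, resolves S g -> v <= \sum_z g z) -> v <= frac_dim S.
Proof.
move=> Sg0 lbv; apply: lb_le_inf; first by exists (\sum_z g0 z), g0.
by move=> _ [g [Sg ->]]; apply: lbv.
Qed.

Lemma resolves_one S :
  (forall x y, x != y -> x \in S x y) -> resolves S (fun=> 1).
Proof.
move=> Sxx; split=> [z|x y xy]; first by rewrite ler01 lexx.
by rewrite (bigD1 x) ?Sxx //= lerDl sumr_ge0.
Qed.

Lemma frac_dim_le_subset S1 S2 : (forall x y, x != y -> x \in S1 x y) ->
  (forall x y, S1 x y \subset S2 x y) -> frac_dim S2 <= frac_dim S1.
Proof.
move=> S1xx S12; apply: frac_dim_ge (resolves_one S1xx) _ => g [g01 Sg].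
apply: frac_dim_le_sum; split=> // x y /Sg /le_trans; apply.
rewrite [leRHS](big_setID (S1 x y)) /= (finset.setIidPr (S12 x y)) lerDl.
by apply: sumr_ge0 => z _; case/andP: (g01 z).
Qed.

Lemma frac_dim_le_ratio S (c : T -> nat) D : (0 < D)%N ->
  (forall z, c z <= D)%N ->
  (forall x y, x != y -> D <= \sum_(z in S x y) c z)%N ->
  frac_dim S <= (\sum_z c z)%:R / D%:R.
Proof.
move=> D0 cD Sc; rewrite natr_sum mulr_suml; apply: frac_dim_le_sum; split.
- by move=> z; rewrite divr_ge0 ?ler0n //= ler_pdivrMr ?ltr0n // mul1r ler_nat.
- move=> x y xy; rewrite -mulr_suml -natr_sum ler_pdivlMr ?ltr0n // mul1r.
  by rewrite ler_nat Sc.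
Qed.

Lemma frac_dim_le_card S (W : {set T}) :
  (forall x y, x != y -> exists2 z, z \in W & z \in S x y) -> frac_dim S <= #|W|%:R.
Proof.
move=> WS; rewrite -sum1_card big_mkcond /= -[leRHS]divr1.
apply: (@frac_dim_le_ratio S _ 1) => // [z|x y /WS [z zW zS]].
  by case: (z \in W).
by rewrite (bigD1 z) //= zW.
Qed.

Lemma frac_dim_ge_packing S (ps : seq (T * T * nat)) D : (0 < D)%N ->
  (forall x y, x != y -> x \in S x y) ->
  (forall p, p \in ps -> p.1.1 != p.1.2) ->
  (forall z, \sum_(p <- ps | z \in S p.1.1 p.1.2) p.2 <= D)%N ->
  (\sum_(p <- ps) p.2)%:R / D%:R <= frac_dim S.
Proof.
move=> D0 Sxx ps_neq packed; apply: frac_dim_ge (resolves_one Sxx) _ => g [g01 Sg].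
have g0 z : 0 <= g z by case/andP: (g01 z).
rewrite ler_pdivrMr ?ltr0n // natr_sum.
apply: (@le_trans _ _ (\sum_(p <- ps) p.2%:R * \sum_(z in S p.1.1 p.1.2) g z)).
  rewrite big_seq [leRHS]big_seq; apply: ler_sum => p /ps_neq /Sg Sp.
  by rewrite ler_peMr ?ler0n.
(* Weak duality: exchange the sums and use that [z] is covered at most [D] times. *)
have -> : \sum_(p <- ps) p.2%:R * \sum_(z in S p.1.1 p.1.2) g z =
    \sum_z g z * (\sum_(p <- ps | z \in S p.1.1 p.1.2) p.2)%:R.
  under eq_bigr do rewrite mulr_sumr big_mkcond.
  under [RHS]eq_bigr do rewrite natr_sum mulr_sumr big_mkcond.
  rewrite exchange_big; apply: eq_bigr => z _; apply: eq_bigr => p _.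
  by case: (z \in _); rewrite // mulrC.
rewrite mulr_suml; apply: ler_sum => z _.
by rewrite ler_wpM2l ?ler_nat.
Qed.


End FractionalDimension.

Section GraphDistance.
Variables (T : finType) (e : rel T).

Lemma dist_eq0 x y : (dist e x y == 0)%N = (x == y).
Proof.
have : (0 < #|T|)%N by apply/card_gt0P; exists x.
by rewrite /dist; case: #|T| => // n _ /=; rewrite finset.in_set1 [y == x]eq_sym; case: (x == y).
Qed.

Lemma mem_R1set_l x y : x != y -> x \in R1set e x y.
Proof.
move=> xy; rewrite inE /dist1.
have /eqP -> : dist e x x == 0 by rewrite dist_eq0.
have : dist e y x != 0 by rewrite dist_eq0 eq_sym.
lia.
Qed.

Lemma R1set_sub_Rset x y : R1set e x y \subset Rset e x y.
Proof. by apply/fintype.subsetP => z; rewrite !inE /dist1; apply: contraNN => /eqP ->. Qed.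

Lemma mem_Rset_l x y : x != y -> x \in Rset e x y.
Proof. by move/mem_R1set_l; apply/fintype.subsetP/R1set_sub_Rset. Qed.

Lemma dimfE (R : realType) : dimf e R = frac_dim R (Rset e).
Proof. by []. Qed.

Lemma dim1fE (R : realType) : dim1f e R = frac_dim R (R1set e).
Proof. by []. Qed.

Lemma dimf_le_dim1f (R : realType) : (dimf e R <= dim1f e R)%R.
Proof.
rewrite dimfE dim1fE; apply: frac_dim_le_subset => x y.
- exact: mem_R1set_l.
- exact: R1set_sub_Rset.
Qed.

End GraphDistance.

Definition manhattan (a b : nat * nat) : nat := `|a.1 - b.1| + `|a.2 - b.2|.

Definition coord {s t} (x : 'I_s * 'I_t) : nat * nat := (val x.1, val x.2).

Lemma coord_eq s t (x y : 'I_s * 'I_t) : (coord x == coord y) = (x == y).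
Proof. by case: x y => [x1 x2] [y1 y2]; rewrite !xpair_eqE. Qed.

Lemma find_leq_iota k N : (k < N)%N -> find (leq k) (iota 0 N) = k.
Proof.
move=> kN; rewrite -(subnKC (ltnW kN)) iotaD find_cat size_iota add0n.
have -> : has (leq k) (iota 0 k) = false by apply/hasPn => i; rewrite mem_iota; lia.
by case: (N - k) (subn_gt0 k N) kN => [|d] /=; [lia | rewrite leqnn addn0].
Qed.

Section GridDistance.
Variables s t : nat.
Notation grid := (@grid_adj s t).
Implicit Types x y z : 'I_s * 'I_t.

Lemma grid_adjE x y : grid x y = (manhattan (coord x) (coord y) == 1)%N.
Proof.
case: x y => [x1 x2] [y1 y2]; rewrite /grid_adj /path_adj /manhattan /coord /= -!val_eqE /=.
by apply/idP/eqP; lia.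
Qed.

Lemma manhattan_step x z : (0 < manhattan (coord x) (coord z))%N ->
  exists y, manhattan (coord x) (coord y) = (manhattan (coord x) (coord z)).-1
            /\ grid y z.
Proof.
case: x z => [x1 x2] [z1 z2]; rewrite /manhattan /coord /= => xz.
have := ltn_ord z1; have := ltn_ord z2; have := ltn_ord x1; have := ltn_ord x2.
move=> *; case: (ltngtP x1 z1) => c1.
- have lt : (z1.-1 < s)%N by lia.
  by exists (Ordinal lt, z2); rewrite grid_adjE /manhattan /coord /=; split; lia.
- have lt : (z1.+1 < s)%N by lia.
  by exists (Ordinal lt, z2); rewrite grid_adjE /manhattan /coord /=; split; lia.
case: (ltngtP x2 z2) => c2.
- have lt : (z2.-1 < t)%N by lia.
  by exists (z1, Ordinal lt); rewrite grid_adjE /manhattan /coord /=; split; lia.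
- have lt : (z2.+1 < t)%N by lia.
  by exists (z1, Ordinal lt); rewrite grid_adjE /manhattan /coord /=; split; lia.
- lia.
Qed.

Lemma ball_grid k x : ball grid k x = [set z | manhattan (coord x) (coord z) <= k]%N.
Proof.
elim: k => [|k IH] /=.
  apply/setP => z; rewrite !inE -coord_eq; case: x z => [x1 x2] [z1 z2].
  by rewrite /manhattan /coord xpair_eqE /=; apply/idP/idP; lia.
apply/setP => z; rewrite IH !inE; apply/idP/idP.
- case/orP => [|/existsP [y]]; first lia.
  rewrite inE grid_adjE => /andP [xy /eqP yz].
  move: xy yz; rewrite /manhattan /coord; lia.
- move=> xz; case: (leqP (manhattan (coord x) (coord z)) k) => [// | kxz].
  have [|y [xy yz]] := @manhattan_step x z; first lia.
  by apply/orP; right; apply/existsP; exists y; rewrite inE xy yz andbT; lia.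
Qed.

Lemma dist_grid x y : dist grid x y = manhattan (coord x) (coord y).
Proof.
rewrite /dist (eq_find (a2 := leq (manhattan (coord x) (coord y)))); last first.
  by move=> k; rewrite ball_grid inE.
rewrite find_leq_iota // card_prod !card_ord.
case: x y => [x1 x2] [y1 y2]; rewrite /manhattan /coord /=.
have := ltn_ord x1; have := ltn_ord x2; have := ltn_ord y1; have := ltn_ord y2; nia.
Qed.

End GridDistance.

Definition grid_pts m n : seq (nat * nat) := [seq (i, j) | i <- iota 0 m, j <- iota 0 n].

Lemma mem_grid_pts m n a : (a \in grid_pts m n) = (a.1 < m)%N && (a.2 < n)%N.
Proof.
case: a => i j; apply/allpairsP/andP => [[[i' j'] [/= + + [-> ->]]]|[im jn]].
  by rewrite !mem_iota.
by exists (i, j); rewrite !mem_iota.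
Qed.

Lemma sum_grid_pts m n (F : nat * nat -> nat) :
  (\sum_(z : 'I_m * 'I_n) F (coord z))%N = sumn (map F (grid_pts m n)).
Proof.
rewrite -(pair_big xpredT xpredT (fun (i : 'I_m) (j : 'I_n) => F (i : nat, j : nat))).
rewrite sumnE big_map big_allpairs.
rewrite -(big_mkord xpredT (fun i => \sum_(j < n) F (i, j : nat))) /index_iota subn0.
by apply: eq_bigr => i _; rewrite -(big_mkord xpredT (fun j => F (i, j))) /index_iota subn0.
Qed.

Section GridLinearProgram.
Variables (R : realType) (m n : nat).
Local Open Scope ring_scope.
Notation V := ('I_m.+1 * 'I_n.+1)%type.
Notation pts := (grid_pts m.+1 n.+1).

Definition of_coord (a : nat * nat) : V := (inord a.1, inord a.2).

Lemma of_coordK a : a \in pts -> coord (of_coord a) = a.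
Proof. by case: a => i j; rewrite mem_grid_pts /coord /= => /andP [im jn]; rewrite !inordK. Qed.

Lemma coord_pts (x : V) : coord x \in pts.
Proof. by rewrite mem_grid_pts !ltn_ord. Qed.

(* Certificates live on nat coordinates, so their side conditions, stated with
   [all] and [sumn], can be checked by computation. *)
Variables (S : V -> V -> {set V}) (P : nat * nat -> nat * nat -> nat * nat -> bool).
Hypothesis S_coord : forall x y z, (z \in S x y) = P (coord x) (coord y) (coord z).

Lemma grid_frac_dim_le (c : nat * nat -> nat) D K : (0 < D)%N ->
  (sumn [seq c a | a <- pts] <= K * D)%N ->
  all (fun a => c a <= D)%N pts ->
  all (fun a => all (fun b =>
    (a != b) ==> (D <= sumn [seq c z * P a b z | z <- pts])%N) pts) pts ->
  frac_dim R S <= K%:R.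
Proof.
move=> D0 cK /allP cD /allP Pc.
apply: le_trans (@frac_dim_le_ratio _ R S (c \o coord) D D0 _ _) _.
- by move=> z; apply: cD (coord_pts z).
- move=> x y xy; have /allP/(_ _ (coord_pts y)) := Pc _ (coord_pts x).
  rewrite coord_eq xy implyTb => /leq_trans; apply.
  rewrite -(sum_grid_pts _ _ (fun z => c z * P (coord x) (coord y) z)%N) [leqRHS]big_mkcond.
  by apply/eq_leq; apply: eq_bigr => z _; rewrite S_coord; case: P; rewrite ?muln1 ?muln0.
- by rewrite ler_pdivrMr ?ltr0n // -natrM ler_nat sum_grid_pts.
Qed.

Lemma grid_frac_dim_ge (ps : seq (nat * nat * (nat * nat) * nat)) D K :
  (forall x y, x != y -> x \in S x y) -> (0 < D)%N ->
  (K <= sumn [seq p.2 | p <- ps])%N ->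
  all (fun p => [&& p.1.1 \in pts, p.1.2 \in pts & p.1.1 != p.1.2]) ps ->
  all (fun z => sumn [seq p.2 * P p.1.1 p.1.2 z | p <- ps] <= D)%N pts ->
  K%:R / D%:R <= frac_dim R S.
Proof.
move=> Sxx D0 Kps /allP ps_ok /allP packed.
set qs := [seq (of_coord p.1.1, of_coord p.1.2, p.2) | p <- ps].
apply: le_trans (@frac_dim_ge_packing _ R S qs D D0 Sxx _ _).
- by rewrite ler_pM2r ?invr_gt0 ?ltr0n // ler_nat big_map; rewrite sumnE big_map in Kps.
- by move=> _ /mapP [p /ps_ok /and3P [p1 p2 p12] ->]; rewrite -coord_eq !of_coordK.
- move=> z; apply: leq_trans (packed _ (coord_pts z)); rewrite sumnE !big_map big_mkcond.
  apply/eq_leq; apply: eq_big_seq => p /ps_ok /and3P [p1 p2 _].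
  by rewrite S_coord !of_coordK //; case: P; rewrite ?muln1 ?muln0.
Qed.

End GridLinearProgram.

Definition separates (f : nat -> nat) (a b z : nat * nat) : bool :=
  f (manhattan a z) != f (manhattan b z).

Lemma grid_Rset_coord s t (x y z : 'I_s * 'I_t) :
  (z \in Rset (@grid_adj s t) x y) = separates id (coord x) (coord y) (coord z).
Proof. by rewrite inE !dist_grid. Qed.

Lemma grid_R1set_coord s t (x y z : 'I_s * 'I_t) :
  (z \in R1set (@grid_adj s t) x y) = separates (minn^~ 2) (coord x) (coord y) (coord z).
Proof. by rewrite inE /dist1 !dist_grid. Qed.

Section GridDimensions.
Variable R : realType.
Local Open Scope ring_scope.

Lemma dimf_grid m n : (0 < m)%N -> (0 < n)%N -> dimf (@grid_adj m.+1 n.+1) R = 2.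
Proof.
move=> m0 n0; rewrite dimfE; apply/le_anti/andP; split.
- set W := [set of_coord m n (0, 0)%N; of_coord m n (m, 0)%N].
  have W2 : #|W| = 2%N.
    by rewrite cards2 -coord_eq !of_coordK ?mem_grid_pts ?xpair_eqE //=; lia.
  rewrite -[2]/(2%N%:R) -W2; apply: frac_dim_le_card => x y xy.
  have : separates id (coord x) (coord y) (0, 0) || separates id (coord x) (coord y) (m, 0).
    move: xy; rewrite -coord_eq; case: x y => [[x1 hx1] [x2 hx2]] [[y1 hy1] [y2 hy2]].
    rewrite /separates /manhattan /coord /= xpair_eqE; lia.
  case/orP => sep; [exists (of_coord m n (0, 0)) | exists (of_coord m n (m, 0))];
    rewrite ?in_set2 ?eqxx ?orbT // grid_Rset_coord of_coordK // mem_grid_pts /=; lia.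
- have := @grid_frac_dim_ge R m n _ _ (@grid_Rset_coord _ _)
    [:: ((0, 0), (1, 1), 1); ((0, 1), (1, 0), 1)]%N 1 2.
  rewrite divr1; apply=> //; first exact: mem_Rset_l.
    by rewrite /= !mem_grid_pts ?xpair_eqE /=; lia.
  apply/allP => -[i j] _; rewrite /= /separates /manhattan /=; lia.
Qed.

Lemma dim1f_grid_ge3 m n : (4 <= m)%N -> (0 < n)%N -> 3 <= dim1f (@grid_adj m.+1 n.+1) R.
Proof.
move=> m4 n0; have := @grid_frac_dim_ge R m n _ _ (@grid_R1set_coord _ _)
  [:: ((0, 0), (1, 1), 1); ((0, 1), (1, 0), 1); ((m, 0), (m, 1), 1)]%N 1 3.
rewrite divr1 dim1fE; apply=> //; first exact: mem_R1set_l.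
  by rewrite /= !mem_grid_pts ?xpair_eqE /=; lia.
apply/allP => -[i j] _; rewrite /= !mul1n addn0.
set A := separates _ (0, 0)%N _ _; set B := separates _ (0, 1)%N _ _.
set C := separates _ (m, 0)%N _ _.
have disjAB : ~~ (A && B) by rewrite /A /B /separates /manhattan /=; lia.
have nearAB : A || B -> (i <= 2)%N by rewrite /A /B /separates /manhattan /=; lia.
have nearC : C -> (m <= i.+1)%N by rewrite /C /separates /manhattan /=; lia.
by move: disjAB nearAB nearC; case: A; case: B; case: C => //=; lia.
Qed.

Lemma dim1f_grid44_ge3 : 3 <= dim1f (@grid_adj 4 4) R.
Proof.
have := @grid_frac_dim_ge R 3 3 _ _ (@grid_R1set_coord _ _)
  [:: ((0, 0), (1, 1), 1); ((0, 1), (1, 0), 1); ((2, 3), (3, 2), 1)]%N 1 3.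
by rewrite divr1 dim1fE; apply; [exact: mem_R1set_l | by [] ..].
Qed.

Lemma dim1f_grid43_ge : 11 / 4 <= dim1f (@grid_adj 4 3) R.
Proof.
have := @grid_frac_dim_ge R 3 2 _ _ (@grid_R1set_coord _ _)
  [:: ((0, 0), (0, 2), 5); ((0, 0), (2, 0), 7); ((0, 1), (1, 0), 4);
      ((0, 1), (1, 2), 6); ((0, 2), (2, 2), 3); ((1, 0), (3, 0), 2);
      ((1, 2), (3, 2), 8); ((2, 0), (3, 1), 9); ((2, 1), (3, 0), 10);
      ((2, 2), (3, 1), 1)]%N 20 55.
rewrite dim1fE => /(_ (@mem_R1set_l _ _) erefl erefl erefl erefl).
apply: le_trans; lra.
Qed.

Lemma dim1f_small_grid_le2 m n :
  (m.+1, n.+1) \in [:: (2, 2); (3, 2); (4, 2); (3, 3)]%N ->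
  dim1f (@grid_adj m.+1 n.+1) R <= 2.
Proof.
rewrite dim1fE !inE => /or4P [] /eqP [-> ->].
- apply: (@grid_frac_dim_le R 1 1 _ _ (@grid_R1set_coord _ _)
    (fun a => a \in [:: (0, 0); (0, 1)]%N) 1) => //; by vm_compute.
- apply: (@grid_frac_dim_le R 2 1 _ _ (@grid_R1set_coord _ _)
    (fun a => a \in [:: (0, 0); (0, 1); (1, 0); (1, 1)]%N) 2) => //; by vm_compute.
- apply: (@grid_frac_dim_le R 3 1 _ _ (@grid_R1set_coord _ _)
    (fun a => a \in [:: (1, 0); (1, 1); (2, 0); (2, 1)]%N) 2) => //; by vm_compute.
- apply: (@grid_frac_dim_le R 2 2 _ _ (@grid_R1set_coord _ _)
    (fun a => a \in [:: (0, 1); (1, 0); (1, 2); (2, 1)]%N) 2) => //; by vm_compute.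
Qed.

Lemma dim1f_grid_gt2 m n : (0 < n <= m)%N ->
  (m.+1, n.+1) \notin [:: (2, 2); (3, 2); (4, 2); (3, 3)]%N ->
  2 < dim1f (@grid_adj m.+1 n.+1) R.
Proof.
case/andP => n0 nm; have [m4 _|] := leqP 4 m.
  by apply: lt_le_trans (dim1f_grid_ge3 m4 n0); lra.
case: m nm => [|[|[|[|]]]] //; case: n n0 => [|[|[|[|]]]] // _ _ _ _.
- by apply: lt_le_trans dim1f_grid43_ge; lra.
- by apply: lt_le_trans dim1f_grid44_ge3; lra.
Qed.

End GridDimensions.

Theorem proposition3p10 (R : realType) (s t : nat) :
  (2 <= t)%N -> (t <= s)%N ->
  (dim1f (@grid_adj s t) R = dimf (@grid_adj s t) R <->
   (s, t) \in [:: (2, 2); (3, 2); (4, 2); (3, 3)]%N).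
Proof.
case: s t => [|m] [|n] // t2 ts; have nm : (0 < n <= m)%N by lia.
have dimf2 : dimf (@grid_adj m.+1 n.+1) R = 2%R by apply: dimf_grid; lia.
rewrite dimf2; split=> [dim1f2 | small].
- by apply/negPn/negP => /(dim1f_grid_gt2 R nm); rewrite dim1f2 ltxx.
- by apply/le_anti; rewrite dim1f_small_grid_le2 //= -dimf2 dimf_le_dim1f.
Qed.
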